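(* Every cutoff is a rational number.
   Context: For a real number $\alpha\ge 1$, define the integer sequence $(P^\alpha_i)_{i\ge 0}$ by $P^\alpha_0=0$, $P^\alpha_1=1$, and for $k\ge 1$, $P^\alpha_{k+1}=P^\alpha_k+P^\alpha_j$, where $j\ge1$ is the unique index with $\alpha P^\alpha_{j-1}<P^\alpha_k\le \alpha P^\alpha_j$. A cutoff is a real number $\alpha\ge 1$ such that for every real $\beta$ with $1\le\beta<\alpha$, the sequences $(P^\alpha_i)$ and $(P^\beta_i)$ are not identical. *)

From HB Require Import structures.
From mathcomp Require Import all_boot all_order all_algebra.
From mathcomp Require Import reals.
Set Implicit Arguments. Unset Strict Implicit. Unset Printing Implicit Defensive.
Import Order.TTheory GRing.Theory Num.Theory.
Local Open Scope ring_scope.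

Section PSeq.
Variable R : realType.
Variable alpha : R.

(* Given s = [:: P_0; ...; P_k] (k >= 1), the index j >= 1 with
   alpha * P_{j-1} < P_k <= alpha * P_j (the first one in 1..k; it is
   unique whenever alpha >= 1). *)
Definition P_index (s : seq nat) : nat :=
  let k := (size s).-1 in
  let pk := nth 0%N s k in
  (find (fun j => (alpha * (nth 0%N s j.-1)%:R < pk%:R) &&
                  (pk%:R <= alpha * (nth 0%N s j)%:R))
        (iota 1 k)).+1.

Definition P_step (s : seq nat) : seq nat :=
  rcons s (nth 0%N s (size s).-1 + nth 0%N s (P_index s))%N.

(* [:: P_0; ...; P_{n+1}] *)
Fixpoint P_list (n : nat) : seq nat :=
  match n with
  | 0 => [:: 0%N; 1%N]
  | n'.+1 => P_step (P_list n')
  end.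

Definition Pseq (i : nat) : nat := nth 0%N (P_list i) i.
End PSeq.

Definition cutoff (R : realType) (alpha : R) : Prop :=
  1 <= alpha /\
  forall beta : R, 1 <= beta -> beta < alpha ->
    ~ (forall i : nat, Pseq beta i = Pseq alpha i).

From HB Require Import structures.
From mathcomp Require Import all_boot all_order all_algebra.
From mathcomp Require Import reals boolp.
From mathcomp Require Import zify.
Import Order.TTheory GRing.Theory Num.Theory.
Local Open Scope ring_scope.
Set Implicit Arguments. Unset Strict Implicit.

(* Write j(k) for the index used to form P_{k+1}.  Since j(k+1) <= j(k) + 1,
   the lag k - j(k) is nondecreasing; it is also bounded, because
   P_{j+m} >= (1 + m / alpha) P_j while P_k <= alpha P_{j(k)}.  Hence from
   some K on j(k+1) = j(k) + 1, and then P_{k+1} / P_{j(k+1)} is a mediant of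
   P_k / P_{j(k)} and P_{j(k)} / P_{j(j(k))}.  So c, the largest of the
   rationals P_i / P_{j(i)} (i <= K) and 1, bounds every ratio
   P_k / P_{j(k)}, and c <= alpha.  Such a c selects the same indices as
   alpha (c P_{j-1} <= alpha P_{j-1} < P_k <= c P_j), hence produces the same
   sequence, so if alpha is a cutoff then alpha = c is rational. *)

Lemma nondecreasing_bounded_stationary (f : nat -> nat) (B : nat) :
  (forall n, (f n <= f n.+1)%N) -> (forall n, (f n <= B)%N) ->
  exists K, forall k, (K <= k)%N -> f k = f K.
Proof.
move=> fS fB; have f_homo := homo_leq leqnn leq_trans fS.
have exv : exists v, `[< exists n, f n = v >].
  by exists (f 0%N); apply/asboolP; exists 0%N.
have ubv v : `[< exists n, f n = v >] -> (v <= B)%N by move=> /asboolP[n <-].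
case: (ex_maxnP exv ubv) => _ /asboolP[K <-] maxK.
exists K => k Kk; apply/eqP; rewrite eqn_leq (f_homo _ _ Kk) andbT.
by apply: maxK; apply/asboolP; exists k.
Qed.

Lemma P_index_eq (R : realType) (gamma : R) (s : seq nat) j :
  let pk := nth 0%N s (size s).-1 in
  0 <= gamma -> (0 < j <= (size s).-1)%N ->
  (forall i, (i < j)%N -> (nth 0%N s i <= nth 0%N s j.-1)%N) ->
  gamma * (nth 0%N s j.-1)%:R < pk%:R -> pk%:R <= gamma * (nth 0%N s j)%:R ->
  P_index gamma s = j.
Proof.
move=> pk g0 /andP[j0 jk] s_le lt_pk pk_le; rewrite /P_index -/pk.
set k := (size s).-1 in jk *; set a := fun i => _ && _.
rewrite (_ : k = j.-1 + (k - j).+1)%N; last by lia.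
rewrite iotaD add1n prednK // find_cat.
have -> : has a (iota 1 j.-1) = false.
  apply/hasPn => i; rewrite mem_iota add1n prednK // => /andP[_ ij].
  apply/nandP; right; rewrite -ltNge; apply: le_lt_trans lt_pk.
  by rewrite ler_wpM2l // ler_nat s_le.
by rewrite /= /a lt_pk pk_le size_iota addn0 prednK.
Qed.

Section PseqTheory.
Variables (R : realType) (alpha : R).

Local Notation P := (Pseq alpha).
Local Notation PL := (P_list alpha).

Lemma size_P_list n : size (PL n) = n.+2.
Proof. by elim: n => [//|n IH] /=; rewrite /P_step size_rcons IH. Qed.

Lemma P_list_prefix n m i : (n <= m)%N -> (i < n.+2)%N ->
  nth 0%N (PL m) i = nth 0%N (PL n) i.
Proof.
move=> + hi; elim: m => [|m IH]; first by rewrite leqn0 => /eqP->.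
rewrite leq_eqVlt => /orP[/eqP->//|]; rewrite ltnS => nm.
by rewrite /= /P_step nth_rcons size_P_list -IH // (leq_trans hi).
Qed.

Lemma nth_P_list n i : (i < n.+2)%N -> nth 0%N (PL n) i = P i.
Proof.
move=> hi; rewrite /Pseq -(P_list_prefix (leq_maxl n i) hi).
by rewrite (P_list_prefix (leq_maxr n i)).
Qed.

Lemma Pseq1 : P 1 = 1%N.
Proof. by rewrite /Pseq /P_list /P_step nth_rcons. Qed.

Definition Pidx (k : nat) : nat := P_index alpha (PL k.-1).

(* Until the index is known to exist, [Pidx k] may point past the end of
   [PL k.-1], where [nth] returns 0. *)
Lemma PseqS_nth k : (0 < k)%N -> P k.+1 = (P k + nth 0%N (PL k.-1) (Pidx k))%N.
Proof.
case: k => [|k] // _; rewrite -(nth_P_list (n := k.+1)) //=.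
by rewrite /P_step nth_rcons size_P_list ltnn eqxx (nth_P_list (i := k.+1)).
Qed.

Lemma Pseq_leS k : (P k <= P k.+1)%N.
Proof. by case: k => [|k]; [rewrite Pseq1 | rewrite (@PseqS_nth k.+1) // leq_addr]. Qed.

Lemma leq_Pseq m n : (m <= n)%N -> (P m <= P n)%N.
Proof. exact: (homo_leq leqnn leq_trans Pseq_leS). Qed.

Lemma Pseq_gt0 k : (0 < k)%N -> (0 < P k)%N.
Proof. by move=> k0; rewrite -Pseq1 leq_Pseq. Qed.

Lemma P_index_P_list (gamma : R) k j : 0 <= gamma -> (0 < j <= k.+1)%N ->
  gamma * (P j.-1)%:R < (P k.+1)%:R -> (P k.+1)%:R <= gamma * (P j)%:R ->
  P_index gamma (PL k) = j.
Proof.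
move=> g0 /andP[j0 jk] lt_Pk Pk_le.
have nthPL i : (i <= k.+1)%N -> nth 0%N (PL k) i = P i by move=> ?; rewrite nth_P_list.
have j1k : (j.-1 <= k.+1)%N := leq_trans (leq_pred j) jk.
apply: P_index_eq => [||i ij||]; rewrite /= ?size_P_list /=.
- exact: g0.
- by rewrite j0 jk.
- have ik : (i <= k.+1)%N := leq_trans (ltnW ij) jk.
  by rewrite !nthPL // leq_Pseq // -ltnS prednK.
- by rewrite !nthPL.
- by rewrite !nthPL.
Qed.

Definition Pratio (k : nat) : R := (P k)%:R / (P (Pidx k))%:R.

Definition Pratio_max (K : nat) : R := \big[Num.max/1]_(1 <= i < K.+1) Pratio i.

Lemma Pratio_max_rat K : exists q : rat, Pratio_max K = ratr q.
Proof.
rewrite /Pratio_max; elim/big_ind: _ => [|x y [qx ->] [qy ->]|i _].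
- by exists 1; rewrite rmorph1.
- by case: (leP (ratr qx) (ratr qy)) => _; [exists qy | exists qx].
- by exists ((P i)%:R / (P (Pidx i))%:R); rewrite fmorph_div !rmorph_nat.
Qed.

Section AlphaGe1.
Hypothesis alpha_ge1 : 1 <= alpha.

Let alpha_gt0 : 0 < alpha. Proof. exact: lt_le_trans ltr01 alpha_ge1. Qed.

Lemma Pidx_spec k : (0 < k)%N ->
  [/\ (0 < Pidx k)%N, (Pidx k <= k)%N,
      alpha * (P (Pidx k).-1)%:R < (P k)%:R & (P k)%:R <= alpha * (P (Pidx k))%:R].
Proof.
case: k => [//|k] _.
have Pk_le : (P k.+1)%:R <= alpha * (P k.+1)%:R by rewrite ler_peMl.
have ex_j : exists j, (P k.+1)%:R <= alpha * (P j)%:R by exists k.+1.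
case: (ex_minnP ex_j) => j Pk_le_j min_j.
have j0 : (0 < j)%N.
  by move: Pk_le_j; rewrite lt0n; apply: contraTneq => ->; rewrite mulr0 lern0 -lt0n Pseq_gt0.
have jk : (j <= k.+1)%N := min_j _ Pk_le.
have lt_Pk : alpha * (P j.-1)%:R < (P k.+1)%:R.
  by rewrite ltNge; apply/negP => /min_j; rewrite leqNgt ltn_predL j0.
suff -> : Pidx k.+1 = j by [].
by apply: P_index_P_list; rewrite ?j0 ?jk // ltW.
Qed.

Lemma PseqS k : (0 < k)%N -> P k.+1 = (P k + P (Pidx k))%N.
Proof.
by move=> k0; have [_ jk _ _] := Pidx_spec k0; rewrite PseqS_nth // nth_P_list // prednK.
Qed.

Lemma Pidx_leS k : (0 < k)%N -> (Pidx k.+1 <= (Pidx k).+1)%N.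
Proof.
move=> k0; have [j0 _ _ Pk_le] := Pidx_spec k0.
have [_ _ _ Pj_le] := Pidx_spec j0.
have [_ _ lt_PSk _] := Pidx_spec (ltn0Sn k).
have : (P (Pidx k.+1).-1 < P (Pidx k).+1)%N.
  rewrite -(ltr_nat R) -(ltr_pM2l alpha_gt0); apply: (lt_le_trans lt_PSk).
  by rewrite (PseqS k0) (PseqS j0) !natrD mulrDr lerD.
by move/(contra_ltn (@leq_Pseq _ _)); lia.
Qed.

Lemma Pseq_growth j m : (0 < j)%N ->
  (alpha + m%:R) * (P j)%:R <= alpha * (P (j + m))%:R.
Proof.
move=> j0; elim: m => [|m IH]; first by rewrite addr0 addn0.
have [_ _ _ Pjm_le] := Pidx_spec (ltn_addr m j0).
rewrite addnS PseqS ?ltn_addr // natrD mulrDr -addn1 natrD addrA mulrDl mul1r.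
by rewrite lerD // (le_trans _ Pjm_le) // ler_nat leq_Pseq // leq_addr.
Qed.

Lemma lag_le k : (0 < k)%N -> ((k - Pidx k)%:R : R) <= alpha ^+ 2 - alpha.
Proof.
move=> k0; have [j0 jk _ Pk_le] := Pidx_spec k0.
have := Pseq_growth (k - Pidx k) j0; rewrite subnKC // => growth.
have Pj_gt0 : 0 < (P (Pidx k))%:R :> R by rewrite ltr0n Pseq_gt0.
rewrite lerBrDl -(ler_pM2r Pj_gt0) (le_trans growth) //.
by rewrite expr2 -mulrA ler_wpM2l // ltW.
Qed.

Lemma Pidx_eventually_succ :
  exists K, (0 < K)%N /\ forall k, (K <= k)%N -> Pidx k.+1 = (Pidx k).+1.
Proof.
pose lag n := (n.+1 - Pidx n.+1)%N.
have lagS n : (lag n <= lag n.+1)%N.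
  have := Pidx_leS (ltn0Sn n); have [_ ? _ _] := Pidx_spec (ltn0Sn n).
  by rewrite /lag; lia.
have lag_bound n : (lag n <= Num.truncn (alpha ^+ 2 - alpha))%N.
  by rewrite truncn_ge_nat ?lag_le // (le_trans _ (lag_le (ltn0Sn 0))).
have [K stat] := nondecreasing_bounded_stationary lagS lag_bound.
exists K.+1; split => // -[//|k] Kk.
have := stat k Kk; have := stat k.+1 (ltnW Kk).
have [_ ? _ _] := Pidx_spec (ltn0Sn k); have [_ ? _ _] := Pidx_spec (ltn0Sn k.+1).
by rewrite /lag; lia.
Qed.

Lemma ratio_le_succ (c : R) k : (0 < k)%N -> Pidx k.+1 = (Pidx k).+1 ->
  (P k)%:R <= c * (P (Pidx k))%:R ->
  (P (Pidx k))%:R <= c * (P (Pidx (Pidx k)))%:R ->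
  (P k.+1)%:R <= c * (P (Pidx k.+1))%:R.
Proof.
move=> k0 jS le_k le_jk; have [j0 _ _ _] := Pidx_spec k0.
by rewrite jS (PseqS k0) (PseqS j0) !natrD mulrDr lerD.
Qed.

Lemma ratio_le_all (c : R) K : (0 < K)%N ->
  (forall k, (K <= k)%N -> Pidx k.+1 = (Pidx k).+1) ->
  (forall i, (0 < i)%N -> (i <= K)%N -> (P i)%:R <= c * (P (Pidx i))%:R) ->
  forall k, (0 < k)%N -> (P k)%:R <= c * (P (Pidx k))%:R.
Proof.
move=> K0 succK base k; elim/ltn_ind: k => -[//|k] IH _.
case: (leqP k.+1 K) => [kK|Kk]; first exact: base.
have k0 : (0 < k)%N := leq_trans K0 Kk.
have [j0 jk _ _] := Pidx_spec k0.
apply: ratio_le_succ => //; first exact: succK.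
  exact: IH.
by apply: IH; rewrite // ltnS (leq_trans jk).
Qed.

Lemma Pratio_max_le K : Pratio_max K <= alpha.
Proof.
rewrite /Pratio_max big_seq; apply: bigmax_le => // i.
rewrite mem_index_iota => /andP[i0 _]; have [j0 _ _ Pi_le] := Pidx_spec i0.
by rewrite /Pratio ler_pdivrMr // ltr0n Pseq_gt0.
Qed.

Lemma ratio_le_Pratio_max K i : (0 < i)%N -> (i <= K)%N ->
  (P i)%:R <= Pratio_max K * (P (Pidx i))%:R.
Proof.
move=> i0 iK; have [j0 _ _ _] := Pidx_spec i0.
rewrite -ler_pdivrMr ?ltr0n ?Pseq_gt0 //.
by apply: (le_bigmax_seq _ i); rewrite // mem_index_iota i0 ltnS.
Qed.

End AlphaGe1.
End PseqTheory.

Lemma P_list_eq_of_ratio_le (R : realType) (alpha c : R) :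
  1 <= alpha -> 0 <= c -> c <= alpha ->
  (forall k, (0 < k)%N -> (Pseq alpha k)%:R <= c * (Pseq alpha (Pidx alpha k))%:R) ->
  forall n, P_list c n = P_list alpha n.
Proof.
move=> ha c0 ca le_c; elim=> [//|n IH].
rewrite /= IH /P_step; congr (rcons _ (_ + nth _ _ _)%N).
have [j0 jn lt_Pn _] := Pidx_spec ha (ltn0Sn n).
apply: P_index_P_list; rewrite ?j0 ?jn ?le_c //.
by apply: le_lt_trans lt_Pn; rewrite ler_wpM2r.
Qed.

Theorem mainTheorem8 (R : realType) (alpha : R) :
  cutoff alpha -> exists q : rat, alpha = ratr q.
Proof.
move=> [ha not_same].
have [K [K0 succK]] := Pidx_eventually_succ ha.
have [q c_q] := Pratio_max_rat alpha K.
have c_ge1 : 1 <= Pratio_max alpha K := bigmax_ge_id _ _ _ _.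
have := Pratio_max_le ha K; rewrite le_eqVlt => /orP[/eqP <-|c_lt]; first by exists q.
exfalso; apply: (not_same _ c_ge1 c_lt) => i.
have le_c := ratio_le_all ha K0 succK (ratio_le_Pratio_max ha (K := K)).
by rewrite /Pseq (P_list_eq_of_ratio_le ha (le_trans ler01 c_ge1) (ltW c_lt) le_c).
Qed.
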